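(* Let $q$ be a prime power and let $n$ and $d$ be odd integers satisfying $1\le d\le n$. Let $\operatorname{Tr}:\mathbb{F}_{q^{2n}}\to\mathbb{F}_{q^2}$, $\operatorname{Tr}(x)=\sum_{k=0}^{n-1}x^{q^{2k}}$. For $a_0\in\mathbb{F}_{q^n}$ and $a_1,\dots,a_{(n-d)/2}\in\mathbb{F}_{q^{2n}}$ define \[ H(x,y)=\operatorname{Tr}\bigg(a_0xy^{q^n}+\sum_{j=1}^{(n-d)/2}\big(a_jxy^{q^{n-2j}}+(a_j)^qx^{q^{n-2j+1}}y^q\big)\bigg),\qquad x,y\in\mathbb{F}_{q^{2n}}. \] Then, as $a_0$ ranges over $\mathbb{F}_{q^n}$ and $a_1,\dots,a_{(n-d)/2}$ range over $\mathbb{F}_{q^{2n}}$, these mappings $H$ are Hermitian forms on $\mathbb{F}_{q^{2n}}$ (viewed as an $n$-dimensional vector space over $\mathbb{F}_{q^2}$) and, identified with matrices in $X(n,q)$, they form an additive $d$-code in $X(n,q)$ of size $q^{n(n-d+1)}$.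
   Context: $X(n,q)$ is the set of $n\times n$ Hermitian matrices over $\mathbb{F}_{q^2}$ (matrices $A$ with $A^*=A$, where $A^*$ is the transpose of the matrix obtained by applying $x\mapsto x^q$ to each entry). A Hermitian form on an $n$-dimensional $\mathbb{F}_{q^2}$-vector space $V$ is a map $H:V\times V\to\mathbb{F}_{q^2}$ that is $\mathbb{F}_{q^2}$-linear in the first argument and satisfies $H(y,x)=H(x,y)^q$. Fixing a basis $\xi_1,\dots,\xi_n$ of $V$, $H$ is identified with the Hermitian matrix $(H(\xi_i,\xi_j))_{i,j}$; this is a bijection between Hermitian forms and $X(n,q)$, and the matrix rank equals $n-\dim\{x\in V:H(x,y)=0\ \forall y\}$. $\mathbb{F}_{q^n}$ is regarded as the subfield of $\mathbb{F}_{q^{2n}}$ of that order. A nonempty subset $Y\subseteq X(n,q)$ is a $d$-code if $\operatorname{rank}(A-B)\ge d$ for all distinct $A,B\in Y$; it is additive if it is a subgroup of $(X(n,q),+)$. *)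

From HB Require Import structures.
From mathcomp Require Import all_boot all_order all_algebra all_field.
Set Implicit Arguments. Unset Strict Implicit. Unset Printing Implicit Defensive.
Import GRing.Theory.
Local Open Scope ring_scope.

Section Defs.
Variables (K : finFieldType) (L : fieldExtType K).

Definition TrL (q n : nat) (x : L) : L := \sum_(k < n) x ^+ (q ^ (2 * k)).

(* the element of K corresponding to v \in 1%VS (coordinate of v on the basis [1]) *)
Definition toK (v : L) : K := coord [tuple (1 : L)] ord0 v.

(* H(x,y) = Tr( a0 x y^(q^n) + sum_{j=1}^{(n-d)/2} (a_j x y^(q^(n-2j)) + a_j^q x^(q^(n-2j+1)) y^q) ),
   with a_j written as a (j-1), j-1 : 'I_((n-d)/2) *)
Definition Hform (q n d : nat) (a0 : L) (a : 'I_((n - d)./2) -> L) (x y : L) : L :=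
  TrL q n (a0 * x * y ^+ (q ^ n)
           + \sum_(i < (n - d)./2)
               (a i * x * y ^+ (q ^ (n - 2 * i.+1))
                + a i ^+ q * x ^+ (q ^ (n - 2 * i.+1).+1) * y ^+ q)).

(* Hermitian form on L (as a K-vector space), K = F_{q^2}, conjugation z |-> z^q *)
Definition hermitian_form (q : nat) (H : L -> L -> L) : Prop :=
  [/\ forall x y, H x y \in 1%VS,
      forall (c : K) x x' y, H (c *: x + x') y = c%:A * H x y + H x' y
    & forall x y, H y x = H x y ^+ q].

Definition gram_mx (n : nat) (xi : n.-tuple L) (H : L -> L -> L) : 'M[K]_n :=
  \matrix_(i < n, j < n) toK (H (tnth xi i) (tnth xi j)).
End Defs.

Definition hermitian_mx (K : finFieldType) (q n : nat) (A : 'M[K]_n) : bool :=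
  (map_mx (fun x => x ^+ q) A)^T == A.
Arguments Hform {K L} q n d a0 a x y.

(* Tr is K-linear, nondegenerate and invariant under x |-> x^(q^2), and
   a0 = a0^(q^n); so each summand of H(x, y)^q agrees with a summand of H(y, x)
   after an even power of the Frobenius, and H is Hermitian.  If x is in the
   radical of H, raising H(y, x) to the power q^(2n-d) gives Tr(y' * hpol x) = 0
   for all y', hence hpol x = 0, where hpol is a linearized polynomial with
   exponents among q^0, q^2, ..., q^(2(n-d)), nonzero unless all parameters
   vanish.  As the radical is an F_(q^2)-space of dimension n - rank, this gives
   rank >= d.  The Gram matrix is additive in the parameters, so the rank bound
   makes it injective on the q^n * q^(2n(n-d)/2) admissible parameters. *)

From HB Require Import structures.
From mathcomp Require Import all_boot all_order all_algebra all_field.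
From mathcomp Require Import zify ring.

Set Implicit Arguments.
Unset Strict Implicit.
Unset Printing Implicit Defensive.

Import GRing.Theory.
Local Open Scope ring_scope.

Lemma card_le_ker_img (V W : finZmodType) (f : V -> W) :
  {morph f : x y / x - y} ->
  (#|V| <= #|[set x | f x == 0%R]| * #|[set f x | x in V]|)%N.
Proof.
move=> fB; pose s y := odflt 0 [pick x | f x == y].
have fsK x : f (s (f x)) = f x by rewrite /s; case: pickP => [x' /eqP | /(_ x)/eqP].
pose g x := (x - s (f x), f x).
have g_inj : injective g by move=> x1 x2 [h1 h2]; rewrite -(subrK (s (f x1)) x1) h1 h2 subrK.
rewrite -cardsX -(card_imset _ g_inj); apply/subset_leq_card/subsetP => _ /imsetP[x _ ->].
by rewrite in_setX inE fB fsK subrr eqxx imset_f.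
Qed.

Lemma sparse_poly_roots (F : fieldType) (I : finType) (c : I -> F) (e : I -> nat)
    (N : nat) (rs : seq F) :
  injective e -> (forall i, e i <= N)%N -> (exists i, c i != 0) -> uniq rs ->
  {in rs, forall x, \sum_i c i * x ^+ e i = 0} -> (size rs <= N)%N.
Proof.
move=> e_inj e_le [i0 ci0] rs_uniq rs_roots.
pose p : {poly F} := \sum_i c i *: 'X^(e i).
have coef_p j : p`_(e j) = c j.
  rewrite coef_sum (bigD1 j) //= coefZ coefXn eqxx mulr1 big1 ?addr0 // => i ij.
  by rewrite coefZ coefXn (inj_eq e_inj) eq_sym (negbTE ij) mulr0.
have p_neq0 : p != 0 by apply: contra_neq ci0 => p0; rewrite -coef_p p0 coef0.
have size_p : (size p <= N.+1)%N.
  apply: leq_trans (size_sum _ _ _) _; apply/bigmax_leqP => i _.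
  by rewrite (leq_trans (size_scale_leq _ _)) // size_polyXn ltnS.
have p_roots : all (root p) rs.
  apply/allP => x /rs_roots x_root; rewrite /root horner_sum -[X in _ == X]x_root.
  by apply/eqP/eq_bigr => i _; rewrite hornerZ hornerXn.
by rewrite -ltnS (leq_trans (max_poly_roots p_neq0 p_roots rs_uniq)).
Qed.

Definition radical (K : finFieldType) (L : fieldExtType K) (H : L -> L -> L) :
  {set FinFieldExtType L} :=
  [set x : FinFieldExtType L | [forall y : FinFieldExtType L, H y x == 0]].

Section GramMatrix.
Variables (K : finFieldType) (L : fieldExtType K).

Lemma toK_alg (c : K) : toK (c%:A : L) = c.
Proof.
have one_free : free [tuple (1 : L)] by rewrite seq1_free oner_neq0.
by rewrite /toK linearZ /= (coord_free ord0 ord0 one_free) mulr1.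
Qed.

Lemma toKK (v : L) : v \in 1%VS -> (toK v)%:A = v.
Proof. by case/vlineP => c ->; rewrite toK_alg. Qed.

Lemma gram_mxB n (xi : n.-tuple L) (H1 H2 : L -> L -> L) :
  gram_mx xi (fun x y => H1 x y - H2 x y) = gram_mx xi H1 - gram_mx xi H2.
Proof. by apply/matrixP => i j; rewrite !mxE /toK linearB. Qed.

Lemma eq_gram_mx n (xi : n.-tuple L) (H1 H2 : L -> L -> L) :
  (forall x y, H1 x y = H2 x y) -> gram_mx xi H1 = gram_mx xi H2.
Proof. by move=> eq_H; apply/matrixP => i j; rewrite !mxE eq_H. Qed.

Variables (q n : nat) (xi : n.-tuple L) (H : L -> L -> L).
Hypotheses (q_gt0 : (0 < q)%N) (xi_basis : basis_of fullv xi) (H_herm : hermitian_form q H).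

Lemma hermitian_form_suml (I : finType) (c : I -> K) (F : I -> L) y :
  H (\sum_i c i *: F i) y = \sum_i (c i)%:A * H (F i) y.
Proof.
have [_ H_lin _] := H_herm.
have H_add u v : H (u + v) y = H u y + H v y by rewrite -{1}[u]scale1r H_lin scale1r mul1r.
have H0 : H 0 y = 0 by apply: (addrI (H 0 y)); rewrite -H_add !addr0.
rewrite (big_morph (H^~ y) H_add H0); apply: eq_bigr => i _.
by rewrite -[_ *: _]addr0 H_lin H0 addr0.
Qed.

Lemma gram_mx_hermitian : hermitian_mx q (gram_mx xi H).
Proof.
have [H_in1 _ H_sym] := H_herm.
apply/eqP/matrixP => i j; rewrite !mxE [in RHS]H_sym.
by rewrite -(toKK (H_in1 (tnth xi j) (tnth xi i))) toK_alg exprZn expr1n toK_alg.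
Qed.

(* The rows of the kernel of the Gram matrix are coordinates of radical vectors. *)
Lemma card_radical_ge : #|K| = (q ^ 2)%N ->
  (q ^ (2 * (n - \rank (gram_mx xi H))) <= #|radical H|)%N.
Proof.
move=> card_K; have [H_in1 _ H_sym] := H_herm.
set G := gram_mx xi H; rewrite -mxrank_ker; set r := \rank (kermx G).
set B := row_base (kermx G).
have BG : B *m G = 0 by apply/eqP; rewrite -sub_kermx eq_row_base.
pose emb (v : 'rV[K]_n) : L := \sum_i v 0 i *: xi`_i.
have emb_inj : injective emb.
  have xi_free := basis_free xi_basis.
  move=> v1 v2 emb12; apply/rowP => j.
  by rewrite -(coord_sum_free (v1 0) j xi_free) -/(emb v1) emb12 coord_sum_free.
pose phi (w : 'rV[K]_r) : FinFieldExtType L := emb (w *m B).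
have phi_inj : injective phi.
  by move=> w1 w2 /emb_inj /(row_free_inj (row_base_free (kermx G))).
have phi_rad w y : H y (phi w) = 0.
  have vG : (w *m B) *m G = 0 by rewrite -mulmxA BG mulmx0.
  have H_phi j : H (phi w) (tnth xi j) = 0.
    transitivity ((((w *m B) *m G) 0 j)%:A : L); last by rewrite vG mxE scale0r.
    rewrite hermitian_form_suml mxE scaler_suml; apply: eq_bigr => i _.
    by rewrite mulr_algl -scalerA /G /gram_mx !mxE toKK ?H_in1 // -(tnth_nth 0).
  rewrite (coord_basis xi_basis (memvf y)) hermitian_form_suml big1 // => j _.
  by rewrite H_sym -(tnth_nth 0) H_phi expr0n eqn0Ngt q_gt0 mulr0.
rewrite expnM -card_K -[r]mul1n -card_mx -(card_imset _ phi_inj) subset_leq_card //.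
apply/subsetP => _ /imsetP[w _ ->].
by rewrite /radical inE; apply/forallP => y; rewrite phi_rad.
Qed.

End GramMatrix.

Lemma pnat_char_card (K : finFieldType) (L : fieldExtType K) p k q :
  prime p -> q = (p ^ k)%N -> #|K| = (q ^ 2)%N -> [pchar L].-nat q.
Proof.
move=> p_prime q_def card_K.
have pK : p \in [pchar K].
  by apply: (@card_finPcharP _ _ (k * 2)); rewrite // card_K q_def expnM.
by rewrite q_def pnatX (pnatE _ p_prime) (pchar_lalg L) pK.
Qed.

Section FrobeniusPowers.
Variables (K : finFieldType) (L : fieldExtType K) (q n : nat).
Hypotheses (q_gt1 : (1 < q)%N) (q_char : [pchar L].-nat q).
Hypotheses (card_K : #|K| = (q ^ 2)%N) (dimL : \dim (fullv : {vspace L}) = n).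

Local Notation Q e x := (x ^+ (q ^ e)).
Local Notation FL := (FinFieldExtType L).

Lemma expq_gt0 e : (0 < q ^ e)%N.
Proof. by rewrite expn_gt0 ltnW. Qed.

Lemma QD e (x y : L) : Q e (x + y) = Q e x + Q e y.
Proof. by apply: exprDn_pchar; rewrite pnatX q_char. Qed.

Lemma Q0 e : Q e (0 : L) = 0.
Proof. by rewrite expr0n eqn0Ngt expq_gt0. Qed.

Lemma QB e (x y : L) : Q e (x - y) = Q e x - Q e y.
Proof. by apply/eqP; rewrite eq_sym subr_eq -QD subrK. Qed.

Lemma Q_sum e (I : Type) (r : seq I) (P : pred I) (F : I -> L) :
  Q e (\sum_(i <- r | P i) F i) = \sum_(i <- r | P i) Q e (F i).
Proof. exact: (big_morph _ (QD e) (Q0 e)). Qed.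

Lemma QQ e1 e2 (x : L) : Q e1 (Q e2 x) = Q (e2 + e1) x.
Proof. by rewrite -exprM -expnD. Qed.

Lemma Qid (x : L) : Q 0 x = x.
Proof. by rewrite expn0 expr1. Qed.

Lemma Q1 (x : L) : x ^+ q = Q 1 x.
Proof. by rewrite expn1. Qed.

Lemma Q_eq0 e (x : L) : (Q e x == 0) = (x == 0).
Proof. by rewrite expf_eq0 expq_gt0. Qed.

Lemma Q_period (x : L) : Q (2 * n) x = x.
Proof.
have := Fermat's_little_theorem (aspacef L) x.
by rewrite memvf /= dimL card_K -expnM => /esym/eqP.
Qed.

Lemma Qeq e1 e2 (x : L) : e1 = (e2 + 2 * n)%N -> Q e1 x = Q e2 x.
Proof. by move->; rewrite -QQ Q_period. Qed.

Lemma mem1P (x : L) : (x \in 1%VS) = (Q 2 x == x).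
Proof. by have := Fermat's_little_theorem (1%AS : {aspace L}) x; rewrite dimv1 card_K. Qed.

Lemma Qalg_even e (c : K) : ~~ odd e -> Q e (c%:A : L) = c%:A.
Proof.
move=> e_even; rewrite -(odd_double_half e) (negbTE e_even) add0n -mul2n.
elim: e./2 => [|k IHk]; first by rewrite Qid.
by rewrite mulnS addnC -QQ IHk -[c%:A]/(in_alg L c) -rmorphXn -card_K expf_card.
Qed.

Lemma card_FL : #|FL| = (q ^ (2 * n))%N.
Proof.
rewrite -(@card_vspacef K (finvect_type L) (Vector.class (finvect_type L : vectType K))).
by rewrite card_vspace card_K -expnM dimL.
Qed.

Lemma card_sparse_roots (I : finType) (c : I -> L) (e : I -> nat) (N : nat)
    (A : {set FL}) :
  injective e -> (forall i, e i <= N)%N -> (exists i, c i != 0) ->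
  {in A, forall x : FL, \sum_i c i * (x : L) ^+ e i = 0} -> (#|A| <= N)%N.
Proof.
move=> e_inj e_le c_neq0 A_roots; rewrite cardE.
apply: (@sparse_poly_roots L I c e N (enum A)) => //; first exact: enum_uniq.
by move=> x x_in; apply: A_roots; rewrite -mem_enum; exact: x_in.
Qed.

Hypothesis n_gt0 : (0 < n)%N.
Local Notation Tr := (@TrL K L q n).

Lemma TrD (x y : L) : Tr (x + y) = Tr x + Tr y.
Proof. by rewrite /TrL -big_split; apply: eq_bigr => k _; rewrite QD. Qed.

Lemma Tr0 : Tr 0 = 0.
Proof. by rewrite /TrL big1 // => k _; rewrite Q0. Qed.

Lemma TrB (x y : L) : Tr (x - y) = Tr x - Tr y.
Proof. by rewrite /TrL -sumrB; apply: eq_bigr => k _; rewrite QB. Qed.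

Lemma Tr_sum (I : Type) (r : seq I) (P : pred I) (F : I -> L) :
  Tr (\sum_(i <- r | P i) F i) = \sum_(i <- r | P i) Tr (F i).
Proof. exact: (big_morph _ TrD Tr0). Qed.

Lemma TrZ (c : K) (x : L) : Tr (c%:A * x) = c%:A * Tr x.
Proof.
rewrite /TrL mulr_sumr; apply: eq_bigr => k _.
by rewrite exprMn Qalg_even // oddM.
Qed.

Lemma Tr_Q e (x : L) : Q e (Tr x) = Tr (Q e x).
Proof. by rewrite /TrL Q_sum; apply: eq_bigr => k _; rewrite !QQ addnC. Qed.

Lemma Tr_Q2 (x : L) : Tr (Q 2 x) = Tr x.
Proof.
rewrite /TrL; case: n n_gt0 (Q_period x) => // n' _ x_period.
rewrite big_ord_recr big_ord_recl /= addrC; congr (_ + _).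
  by rewrite QQ muln0 Qid -[RHS]x_period mulnS.
by apply: eq_bigr => k _; rewrite QQ /bump leq0n add1n mulnS.
Qed.

Lemma Tr_Q_even e (x : L) : ~~ odd e -> Tr (Q e x) = Tr x.
Proof.
move=> e_even; rewrite -(odd_double_half e) (negbTE e_even) add0n -mul2n.
elim: e./2 => [|k IHk]; first by rewrite Qid.
by rewrite mulnS addnC -QQ Tr_Q2 IHk.
Qed.

Lemma Tr_in1 (x : L) : Tr x \in 1%VS.
Proof. by rewrite mem1P Tr_Q Tr_Q2. Qed.

(* Otherwise all of L would be roots of sum_k z^(q^2k) X^(q^2k), of degree q^(2n-2). *)
Lemma Tr_nondegenerate (z : L) : (forall w, Tr (w * z) = 0) -> z = 0.
Proof.
move=> Trz0; apply/eqP/contraT => z_neq0.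
suff : (#|[set: FL]| <= q ^ (2 * (n - 1)))%N.
  by rewrite cardsT card_FL leq_exp2l //; lia.
apply: (@card_sparse_roots 'I_n (fun k => Q (2 * k) z) (fun k => q ^ (2 * k))%N).
- by move=> k1 k2 /eqP; rewrite eqn_exp2l // => /eqP k12; apply: val_inj => /=; lia.
- by move=> k; rewrite leq_exp2l //; have := ltn_ord k; lia.
- by exists (Ordinal n_gt0); rewrite /= muln0 Qid.
- by move=> x _; rewrite -[RHS](Trz0 x); apply: eq_bigr => k _; rewrite exprMn mulrC.
Qed.

Lemma card_Q_roots (c : L) : (#|[set x : FL | (Q n x == c * x)%R]| <= q ^ n)%N.
Proof.
apply: (@card_sparse_roots bool (fun b => if b then 1 else - c)
  (fun b => if b then q ^ n else 1)%N).
- have qn_neq1 : (q ^ n != 1)%N by rewrite -(expn0 q) eqn_exp2l // -lt0n.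
  by case=> [] [] //= /eqP; rewrite ?(negbTE qn_neq1) // eq_sym (negbTE qn_neq1).
- by case=> //; rewrite expq_gt0.
- by exists true; rewrite oner_neq0.
- move=> x; rewrite inE => /eqP x_root.
  by rewrite big_bool /= mul1r x_root expr1 mulNr addrN.
Qed.

(* The kernel of x |-> x^(q^n) - x has at least q^n elements since its image lies in
   the kernel of y |-> y^(q^n) + y, and both kernels are root sets of degree q^n. *)
Lemma card_Qn_fixed : #|[set x : FL | Q n x == x]| = (q ^ n)%N.
Proof.
pose f (x : FL) : FL := Q n (x : L) - x.
have fB : {morph f : x y / x - y} by move=> x y; rewrite /f QB; ring.
have ker_f : [set x | f x == 0] = [set x : FL | Q n x == x].
  by apply/setP => x; rewrite !inE subr_eq0.
have img_f : [set f x | x in FL] \subset [set x : FL | (Q n x == -1 * x)%R].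
  apply/subsetP => _ /imsetP[x _ ->]; rewrite inE /f QB QQ addnn -mul2n Q_period.
  by rewrite mulN1r opprB.
have fix_le : [set x : FL | Q n x == x] \subset [set x : FL | (Q n x == 1 * x)%R].
  by apply/subsetP => x; rewrite !inE mul1r.
apply/eqP; rewrite eqn_leq (leq_trans (subset_leq_card fix_le)) ?card_Q_roots //=.
rewrite -(@leq_pmul2r (q ^ n)) ?expq_gt0 // -expnD addnn -mul2n -card_FL.
rewrite (leq_trans (card_le_ker_img fB)) // ker_f leq_mul //.
exact: leq_trans (subset_leq_card img_f) (card_Q_roots _).
Qed.

Section HermitianCode.
Variable d : nat.
Hypotheses (n_odd : odd n) (d_odd : odd d) (d_le_n : (d <= n)%N).
Local Notation m := ((n - d)./2).
Local Notation H := (@Hform K L q n d).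

Lemma n_half : n = (2 * n./2).+1.
Proof. by rewrite -[in LHS](odd_double_half n) n_odd add1n -mul2n. Qed.

Lemma d_half : d = (2 * d./2).+1.
Proof. by rewrite -[in LHS](odd_double_half d) d_odd add1n -mul2n. Qed.

Lemma m_half : m = (n./2 - d./2)%N.
Proof.
by rewrite {1}n_half {1}d_half subSS -mulnBr mul2n doubleK.
Qed.

Ltac exp_arith := have := n_half; have := d_half; have := m_half; lia.

(* Exponents of the Frobenius only matter modulo 2n (Q_period). *)
Ltac Q_congr := first
  [ by congr (_ ^+ (q ^ _)); exp_arith
  | by apply: Qeq; exp_arith
  | by symmetry; apply: Qeq; exp_arith
  | by rewrite -[RHS]Qid; apply: Qeq; exp_arith
  | by rewrite -[LHS]Qid; symmetry; apply: Qeq; exp_arith ].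

Lemma odd_conj_exp (i : 'I_m) : ~~ odd (n - 2 * i.+1).+1.
Proof. by rewrite oddS oddB ?n_odd ?oddM //; have := ltn_ord i; exp_arith. Qed.

Lemma Hform_linear a0 a (c : K) (x x' y : L) :
  H a0 a (c *: x + x') y = c%:A * H a0 a x y + H a0 a x' y.
Proof.
rewrite -[c *: x]mulr_algl /Hform -TrZ -TrD; congr Tr.
have term_lin (i : 'I_m) :
   a i * (c%:A * x + x') * Q (n - 2 * i.+1) y
   + a i ^+ q * Q (n - 2 * i.+1).+1 (c%:A * x + x') * y ^+ q
 = c%:A * (a i * x * Q (n - 2 * i.+1) y + a i ^+ q * Q (n - 2 * i.+1).+1 x * y ^+ q)
   + (a i * x' * Q (n - 2 * i.+1) y + a i ^+ q * Q (n - 2 * i.+1).+1 x' * y ^+ q).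
  by rewrite QD exprMn Qalg_even ?odd_conj_exp //; ring.
by rewrite (eq_bigr _ (fun i _ => term_lin i)) big_split /= -mulr_sumr; ring.
Qed.

Lemma Hform_sym a0 a (x y : L) : Q n a0 = a0 -> H a0 a y x = H a0 a x y ^+ q.
Proof.
move=> a0_fixed; rewrite /Hform [RHS]Q1 Tr_Q QD Q_sum TrD Tr_sum [RHS]TrD Tr_sum.
congr (_ + _).
  rewrite -[RHS](Tr_Q_even (e := n - 1)) ?oddB ?n_odd // !exprMn !QQ mulrAC.
  by congr (Tr (_ * _ * _)); [rewrite -{1}a0_fixed|..]; Q_congr.
apply: eq_bigr => i _; have := ltn_ord i => lt_i_m.
rewrite QD !TrD addrC; congr (_ + _).
  by rewrite !Q1 !exprMn !QQ mulrAC; congr (Tr (_ * _ * _)); Q_congr.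
rewrite !Q1 !exprMn !QQ -[RHS](Tr_Q_even (e := 2 * n - 2)); last first.
  by rewrite oddB ?oddM //; lia.
by rewrite !exprMn !QQ mulrAC; congr (Tr (_ * _ * _)); Q_congr.
Qed.

Lemma hermitian_Hform a0 a : Q n a0 = a0 -> hermitian_form q (H a0 a).
Proof.
by move=> a0_fixed; split=> *; [apply: Tr_in1 | apply: Hform_linear | apply: Hform_sym].
Qed.

Local Notation T := (2 * n - d)%N.

(* What remains of H(y, x)^(q^T) once all Frobenius powers are moved off y by the
   invariance of Tr; its exponents are the q^(2k) with k <= n - d. *)
Definition hpol (a0 : L) (a : 'I_m -> L) (x : L) : L :=
  Q T a0 * Q (n - d) x + \sum_(i < m) (Q T (a i) * Q (n - d - 2 * i.+1) x
      + Q (n - d + 2 * i.+1) (a i) * Q (n - d + 2 * i.+1) x).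

Lemma Hform_Q a0 a (x y : L) : Q T (H a0 a y x) = Tr (Q T y * hpol a0 a x).
Proof.
rewrite /Hform Tr_Q /hpol QD Q_sum TrD Tr_sum mulrDr mulr_sumr [RHS]TrD Tr_sum.
congr (_ + _).
  by rewrite !exprMn !QQ mulrA (mulrC (Q T y)); congr (Tr (_ * _)); Q_congr.
apply: eq_bigr => i _; have := ltn_ord i => lt_i_m.
rewrite QD mulrDr !TrD; congr (_ + _).
  by rewrite !exprMn !QQ mulrA (mulrC (Q T y)); congr (Tr (_ * _)); Q_congr.
rewrite !Q1 -[LHS](Tr_Q_even (e := n + 2 * i.+1 - 1)); last first.
  by rewrite oddB ?oddD ?n_odd ?oddM //; lia.
by rewrite !exprMn !QQ mulrA (mulrC (Q T y)); congr (Tr (_ * _ * _)); Q_congr.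
Qed.

Lemma hpol_radical a0 a (x : L) : (forall y, H a0 a y x = 0) -> hpol a0 a x = 0.
Proof.
move=> x_rad; apply: Tr_nondegenerate => w.
by rewrite -[w](@Qeq (d + T) 0) ?Qid -?QQ -?Hform_Q ?x_rad ?Q0 //; exp_arith.
Qed.

Lemma card_radical_Hform a0 a : (a0 != 0 \/ exists i, a i != 0) ->
  (#|radical (H a0 a)| <= q ^ (2 * (n - d)))%N.
Proof.
move=> a_neq0.
pose c (j : 'I_1 + ('I_m + 'I_m)) : L :=
  match j with inl _ => Q T a0 | inr (inl i) => Q T (a i)
             | inr (inr i) => Q (n - d + 2 * i.+1) (a i) end.
pose exps (j : 'I_1 + ('I_m + 'I_m)) : nat :=
  match j with inl _ => n - d | inr (inl i) => n - d - 2 * i.+1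
             | inr (inr i) => n - d + 2 * i.+1 end%N.
apply: (@card_sparse_roots _ c (fun j => q ^ exps j)%N).
- move=> j1 j2 /eqP; rewrite eqn_exp2l // => /eqP.
  case: j1 j2 => [u|[i|i]] [v|[j|j]] /= eq_exps;
    try have := ltn_ord i; try have := ltn_ord j; move=> *.
  all: try (by exfalso; exp_arith).
  - by rewrite (ord1 u) (ord1 v).
  - by do 2 f_equal; apply: val_inj => /=; exp_arith.
  - by do 2 f_equal; apply: val_inj => /=; exp_arith.
- by move=> [u|[i|i]]; rewrite leq_exp2l //=; try have := ltn_ord i; exp_arith.
- case: a_neq0 => [a0_neq0 | [i ai_neq0]]; [exists (inl ord0) | exists (inr (inl i))];
    by rewrite /= Q_eq0.
- move=> x; rewrite /radical inE => /forallP x_rad.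
  rewrite -[RHS](@hpol_radical a0 a x) => [|y]; last by apply/eqP; exact: x_rad.
  by rewrite !big_sumType big_ord1 /hpol big_split.
Qed.

Lemma rank_gram_Hform (xi : n.-tuple L) a0 a : basis_of fullv xi -> Q n a0 = a0 ->
  (a0 != 0 \/ exists i, a i != 0) -> (d <= \rank (gram_mx xi (H a0 a)))%N.
Proof.
move=> xi_basis a0_fixed a_neq0.
have := card_radical_ge (ltnW q_gt1) xi_basis (hermitian_Hform a a0_fixed) card_K.
move/leq_trans/(_ (card_radical_Hform a_neq0)); rewrite leq_exp2l // leq_mul2l /=.
by have := rank_leq_row (gram_mx xi (H a0 a)); lia.
Qed.

Lemma eq_Hform a0 (a b : 'I_m -> L) (x y : L) : a =1 b -> H a0 a x y = H a0 b x y.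
Proof.
by move=> eq_ab; rewrite /Hform; congr (Tr (_ + _)); apply: eq_bigr => i _; rewrite eq_ab.
Qed.

Lemma HformB a0 b0 (a b : 'I_m -> L) (x y : L) :
  H (a0 - b0) (fun i => a i - b i) x y = H a0 a x y - H b0 b x y.
Proof.
rewrite /Hform -TrB; congr Tr.
have termB (i : 'I_m) :
   (a i - b i) * x * Q (n - 2 * i.+1) y + (a i - b i) ^+ q * Q (n - 2 * i.+1).+1 x * y ^+ q
 = (a i * x * Q (n - 2 * i.+1) y + a i ^+ q * Q (n - 2 * i.+1).+1 x * y ^+ q)
   - (b i * x * Q (n - 2 * i.+1) y + b i ^+ q * Q (n - 2 * i.+1).+1 x * y ^+ q).
  by rewrite !Q1 QB; ring.
by rewrite (eq_bigr _ (fun i _ => termB i)) sumrB; ring.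
Qed.

Definition Hcode_params : {set FL * {ffun 'I_m -> FL}} :=
  setX [set x : FL | Q n x == x] [set: {ffun 'I_m -> FL}].

Definition Hgram (xi : n.-tuple L) (p : FL * {ffun 'I_m -> FL}) : 'M[K]_n :=
  gram_mx xi (H p.1 p.2).

Definition Hcode (xi : n.-tuple L) : {set 'M[K]_n} := Hgram xi @: Hcode_params.

Lemma Hcode_paramsP (p : FL * {ffun 'I_m -> FL}) : (p \in Hcode_params) = (Q n p.1 == p.1).
Proof. by rewrite !inE andbT. Qed.

Lemma HgramB (xi : n.-tuple L) p1 p2 : Hgram xi (p1 - p2) = Hgram xi p1 - Hgram xi p2.
Proof.
rewrite /Hgram -gram_mxB; apply: eq_gram_mx => x y.
by rewrite -HformB; apply: (@eq_Hform (p1.1 - p2.1)) => i; rewrite ffunE /= ffunE.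
Qed.

Lemma Hcode_paramsB p1 p2 :
  p1 \in Hcode_params -> p2 \in Hcode_params -> p1 - p2 \in Hcode_params.
Proof.
by rewrite !Hcode_paramsP => /eqP p1_fixed /eqP p2_fixed; rewrite QB p1_fixed p2_fixed.
Qed.

Lemma param_neq0 (p : FL * {ffun 'I_m -> FL}) :
  p != 0 -> (p.1 : L) != 0 \/ exists i, (p.2 i : L) != 0.
Proof.
move=> p_neq0; case: (eqVneq (p.1 : L) 0) => [p1_0 | ]; [right | by left].
apply/existsP; move: p_neq0; apply: contraNT => /existsPn p2_0.
case: p p1_0 p2_0 => a0 a /= -> a_0; apply/eqP; congr (_, _).
by apply/ffunP => i; rewrite ffunE; apply/eqP/negPn/a_0.
Qed.

Lemma rank_Hgram (xi : n.-tuple L) p1 p2 : basis_of fullv xi ->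
  p1 \in Hcode_params -> p2 \in Hcode_params -> p1 != p2 ->
  (d <= \rank (Hgram xi p1 - Hgram xi p2)%R)%N.
Proof.
move=> xi_basis p1_in p2_in p12; rewrite -HgramB.
have := Hcode_paramsB p1_in p2_in; rewrite Hcode_paramsP => /eqP p_fixed.
by apply: rank_gram_Hform => //; apply: param_neq0; rewrite subr_eq0.
Qed.

Section Code.
Variable xi : n.-tuple L.
Hypothesis xi_basis : basis_of fullv xi.

Lemma mem_Hcode (A : 'M[K]_n) :
  A \in Hcode xi <-> exists a0 a, Q n a0 = a0 /\ A = gram_mx xi (H a0 a).
Proof.
split=> [/imsetP[p p_in ->] | [a0 [a [a0_fixed ->]]]].
  by exists p.1, p.2; split=> //; apply/eqP; rewrite -Hcode_paramsP.
apply/imsetP; exists (a0 : FL, [ffun i => a i : FL]); first by rewrite Hcode_paramsP a0_fixed.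
by apply: eq_gram_mx => x y; apply: eq_Hform => i; rewrite ffunE.
Qed.

Lemma Hcode_hermitian A : A \in Hcode xi -> hermitian_mx q A.
Proof.
case/imsetP => p; rewrite Hcode_paramsP => /eqP p_fixed ->.
by apply: gram_mx_hermitian; apply: hermitian_Hform.
Qed.

Lemma Hcode_subr_closed : 0 \in Hcode xi /\ {in Hcode xi &, forall A B, A - B \in Hcode xi}.
Proof.
have HcodeB A B : A \in Hcode xi -> B \in Hcode xi -> A - B \in Hcode xi.
  case/imsetP => [p1 p1_in ->] /imsetP[p2 p2_in ->].
  by rewrite -HgramB imset_f // Hcode_paramsB.
split=> //; have [p p_in] : exists p, p \in Hcode_params.
  by exists 0; rewrite Hcode_paramsP Q0.
by rewrite -(subrr (Hgram xi p)) HcodeB // imset_f.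
Qed.

Lemma Hcode_rank A B : A \in Hcode xi -> B \in Hcode xi -> A != B -> (d <= \rank (A - B)%R)%N.
Proof.
case/imsetP => [p1 p1_in ->] /imsetP[p2 p2_in ->] A_neq_B.
by apply: rank_Hgram => //; apply: contraNneq A_neq_B => ->.
Qed.

Lemma card_Hcode : #|Hcode xi| = (q ^ (n * (n - d + 1)))%N.
Proof.
rewrite card_in_imset => [|p1 p2 p1_in p2_in eq_p12]; last first.
  apply/eqP/contraT => /(rank_Hgram xi_basis p1_in p2_in).
  by rewrite eq_p12 subrr mxrank0; have := d_half; lia.
rewrite cardsX cardsT card_ffun card_ord card_Qn_fixed card_FL -expnM -expnD.
by congr (expn q _); have := n_half; have := d_half; have := m_half; nia.
Qed.

End Code.
End HermitianCode.
End FrobeniusPowers.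

Theorem theorem4p2 (K : finFieldType) (L : fieldExtType K) (q n d : nat)
  (hq : exists p k : nat, [/\ prime p, (0 < k)%N & q = (p ^ k)%N])
  (hK : #|K| = (q ^ 2)%N) (hL : \dim (fullv : {vspace L}) = n)
  (hn : odd n) (hd : odd d) (hd1 : (1 <= d)%N) (hdn : (d <= n)%N)
  (xi : n.-tuple L) (hxi : basis_of fullv xi) :
  (forall (a0 : L) (a : 'I_((n - d)./2) -> L), a0 ^+ (q ^ n) = a0 ->
      hermitian_form q (Hform q n d a0 a))
  /\
  exists Y : {set 'M[K]_n},
    [/\ forall A : 'M[K]_n, A \in Y <->
          exists (a0 : L) (a : 'I_((n - d)./2) -> L),
            a0 ^+ (q ^ n) = a0 /\ A = gram_mx xi (Hform q n d a0 a),
        forall A, A \in Y -> hermitian_mx q A,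
        (0 \in Y) /\ (forall A B, A \in Y -> B \in Y -> A - B \in Y),
        forall A B, A \in Y -> B \in Y -> A != B -> (d <= \rank (A - B)%R)%N
      & #|Y| = (q ^ (n * (n - d + 1)))%N].
Proof.
have [p [k [p_prime k_gt0 q_def]]] := hq.
have q_gt1 : (1 < q)%N by rewrite q_def -(exp1n k) ltn_exp2r ?prime_gt1.
have q_char : [pchar L].-nat q := pnat_char_card L p_prime q_def hK.
have n_gt0 := odd_gt0 hn.
split=> [a0 a a0_fixed | ]; first exact: hermitian_Hform.
exists (Hcode q d xi); split.
- exact: mem_Hcode.
- exact: Hcode_hermitian.
- exact: Hcode_subr_closed.
- exact: Hcode_rank.
- exact: card_Hcode.
Qed.
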